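(* For every $\epsilon>0$ there is $L_0>\pi\sqrt2$ such that for all $L>L_0$, $b_L(L/2)<2+\epsilon$.
   Context: For $\alpha\in(0,1/\sqrt2)$ let $L_\alpha=\pi/\mathrm{AGM}(\alpha,\tfrac12\sqrt{1+2\alpha^2})$ (arithmetic–geometric mean); $\alpha\mapsto L_\alpha$ is a decreasing bijection from $(0,1/\sqrt2)$ onto $(\pi\sqrt2,\infty)$. For $L>\pi\sqrt2$ let $\alpha$ satisfy $L_\alpha=L$ and let $x_0>y_0>0$ satisfy $x_0^2+y_0^2=1$, $x_0y_0=\alpha^2$. Let $(x_L,y_L,z_L)(t)$ solve $x'=-xz$, $y'=yz$, $z'=x^2-y^2$ ($'=d/dt$) with initial value $(x_0,y_0,0)$, and let $a_L,b_L$ solve $a'=2x_L+az_L$, $b'=2y_L-bz_L$ with $a_L(0)=b_L(0)=0$. *)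

From Stdlib Require Import Reals.
From Coquelicot Require Import Coquelicot.
Open Scope R_scope.

Fixpoint agm_iter (a b : R) (n : nat) : R * R :=
  match n with
  | O => (a, b)
  | S n => let p := agm_iter a b n in ((fst p + snd p) / 2, sqrt (fst p * snd p))
  end.

Definition AGM (a b : R) : R := real (Lim_seq (fun n => fst (agm_iter a b n))).

Definition L_of (alpha : R) : R := PI / AGM alpha (sqrt (1 + 2 * alpha ^ 2) / 2).

(* Write p = x0, q = y0 and R(t) = sqrt (p^2 cos^2 t + q^2 sin^2 t), and let F be the primitive
   of 1/R with F 0 = 0.  The curve (R, p q / R, (p^2 - q^2) sin t cos t / R), run at time F t,
   solves the system; by a Gronwall estimate on the unit sphere it is the solution.  Along it
   (b y)' = 2 y^2, which for t in [0, PI/2] is dominated by the derivative of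
   2 p + 2 (q^2 sin t - p^2 cos t) / R, whence b <= 2 + 2 q / p on [0, F (PI/2)].
   Iterating Gauss's Landen substitution gives PI/2 <= F (PI/2) * AGM, and the AGM of the
   statement starts from the first AGM step of (p, q), so L/2 <= F (PI/2).  Finally
   L <= PI / alpha: a large L forces alpha small, and 2 q / p < 4 p q = 4 alpha^2. *)

From Stdlib Require Import Reals Lra Psatz Nsatz.
From Coquelicot Require Import Coquelicot.
Open Scope R_scope.

Lemma is_derive_eq (f : R -> R) (t l l' : R) : is_derive f t l -> l = l' -> is_derive f t l'.
Proof. intros H <-. exact H. Qed.

(* Coquelicot states these rules with the generic [plus], [minus], [opp], [scal]; the instances
   below on [R -> R] can be applied to goals written with [Rplus], [Rmult], ... *)
Lemma is_derive_Rplus (f g : R -> R) t df dg :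
  is_derive f t df -> is_derive g t dg -> is_derive (fun s => f s + g s) t (df + dg).
Proof. exact (is_derive_plus f g t df dg). Qed.

Lemma is_derive_Rminus (f g : R -> R) t df dg :
  is_derive f t df -> is_derive g t dg -> is_derive (fun s => f s - g s) t (df - dg).
Proof. exact (is_derive_minus f g t df dg). Qed.

Lemma is_derive_Ropp (f : R -> R) t df :
  is_derive f t df -> is_derive (fun s => - f s) t (- df).
Proof. exact (is_derive_opp f t df). Qed.

Lemma is_derive_Rcomp (f g : R -> R) t df dg :
  is_derive f (g t) df -> is_derive g t dg -> is_derive (fun s => f (g s)) t (dg * df).
Proof. exact (is_derive_comp f g t df dg). Qed.

Lemma is_derive_Rsqr (f : R -> R) t df :
  is_derive f t df -> is_derive (fun s => f s ^ 2) t (2 * f t * df).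
Proof. intros H. eapply is_derive_eq; [apply is_derive_pow, H | simpl; ring]. Qed.

Lemma continuity_pt_of_is_derive (f df : R -> R) t :
  (forall s, is_derive f s (df s)) -> continuity_pt f t.
Proof.
  intros Hf. apply continuity_pt_filterlim, (ex_derive_continuous (V := R_NormedModule)).
  exists (df t). apply Hf.
Qed.

Lemma is_derive_nonneg_le (f df : R -> R) a b : a <= b ->
  (forall t, is_derive f t (df t)) -> (forall t, a <= t <= b -> 0 <= df t) -> f a <= f b.
Proof.
  intros Hab Hf Hdf.
  destruct (MVT_gen f a b df) as [c [Hc Hmvt]].
  - intros t _. apply Hf.
  - intros t _. apply (continuity_pt_of_is_derive f df), Hf.
  - rewrite Rmin_left, Rmax_right in Hc by lra.
    assert (0 <= df c * (b - a)) by (apply Rmult_le_pos; [apply Hdf | ]; lra).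
    lra.
Qed.

Lemma is_derive_zero_eq (f : R -> R) a b : (forall t, is_derive f t 0) -> f a = f b.
Proof.
  intros Hf.
  destruct (MVT_gen f a b (fun _ => 0)) as [c [_ Hmvt]].
  - intros t _. apply Hf.
  - intros t _. apply (continuity_pt_of_is_derive f (fun _ => 0)), Hf.
  - lra.
Qed.

Lemma ex_antiderivative (f : R -> R) :
  (forall t, continuous f t) -> exists F, F 0 = 0 /\ forall t, is_derive F t (f t).
Proof.
  intros Hf. exists (fun t => RInt f 0 t). split.
  - apply (RInt_point (V := R_CompleteNormedModule)).
  - intros t. apply is_derive_RInt with 0; [|apply Hf].
    apply filter_forall. intros u.
    apply (RInt_correct (V := R_CompleteNormedModule)),
          (ex_RInt_continuous (V := R_CompleteNormedModule)).
    intros; apply Hf.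
Qed.

Lemma sin2_cos2_pow t : sin t ^ 2 + cos t ^ 2 = 1.
Proof. rewrite <- (sin2_cos2 t). unfold Rsqr. ring. Qed.

Definition ell_norm (a b t : R) : R := sqrt (a ^ 2 * cos t ^ 2 + b ^ 2 * sin t ^ 2).

Lemma ell_norm_sq_bounds a b t : 0 < a -> 0 < b ->
  Rmin a b ^ 2 <= a ^ 2 * cos t ^ 2 + b ^ 2 * sin t ^ 2 <= Rmax a b ^ 2.
Proof.
  intros Ha Hb. pose proof (sin2_cos2_pow t).
  pose proof (Rmin_l a b). pose proof (Rmin_r a b).
  pose proof (Rmax_l a b). pose proof (Rmax_r a b).
  assert (0 < Rmin a b) by (apply Rmin_glb_lt; lra).
  assert (Rmin a b ^ 2 <= a ^ 2 /\ Rmin a b ^ 2 <= b ^ 2) by (split; nra).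
  assert (a ^ 2 <= Rmax a b ^ 2 /\ b ^ 2 <= Rmax a b ^ 2) by (split; nra).
  assert (0 <= cos t ^ 2 /\ 0 <= sin t ^ 2) by (split; nra).
  split; nra.
Qed.

Lemma ell_norm_sq_pos a b t : 0 < a -> 0 < b -> 0 < a ^ 2 * cos t ^ 2 + b ^ 2 * sin t ^ 2.
Proof.
  intros Ha Hb. pose proof (ell_norm_sq_bounds a b t Ha Hb).
  assert (0 < Rmin a b) by (apply Rmin_glb_lt; lra). nra.
Qed.

Lemma ell_norm_pos a b t : 0 < a -> 0 < b -> 0 < ell_norm a b t.
Proof. intros. apply sqrt_lt_R0, ell_norm_sq_pos; assumption. Qed.

Lemma ell_norm_sqr a b t : 0 < a -> 0 < b ->
  ell_norm a b t ^ 2 = a ^ 2 * cos t ^ 2 + b ^ 2 * sin t ^ 2.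
Proof. intros. apply pow2_sqrt, Rlt_le, ell_norm_sq_pos; assumption. Qed.

Lemma ell_norm_ge_min a b t : 0 < a -> 0 < b -> Rmin a b <= ell_norm a b t.
Proof.
  intros Ha Hb. assert (0 < Rmin a b) by (apply Rmin_glb_lt; lra).
  rewrite <- (sqrt_pow2 (Rmin a b)) by lra.
  apply sqrt_le_1_alt, ell_norm_sq_bounds; assumption.
Qed.

Lemma ell_norm_le_max a b t : 0 < a -> 0 < b -> ell_norm a b t <= Rmax a b.
Proof.
  intros Ha Hb. rewrite <- (sqrt_pow2 (Rmax a b)) by (pose proof (Rmax_l a b); lra).
  apply sqrt_le_1_alt, ell_norm_sq_bounds; assumption.
Qed.

Lemma ell_norm_0 a b : 0 < a -> ell_norm a b 0 = a.
Proof.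
  intros Ha. unfold ell_norm. rewrite cos_0, sin_0.
  replace (a ^ 2 * 1 ^ 2 + b ^ 2 * 0 ^ 2) with (a ^ 2) by ring.
  apply sqrt_pow2. lra.
Qed.

Lemma ell_norm_le_lin a b t : 0 < a -> 0 < b -> 0 <= cos t -> 0 <= sin t ->
  ell_norm a b t <= a * cos t + b * sin t.
Proof.
  intros Ha Hb Hc Hs. pose proof (ell_norm_sqr a b t Ha Hb). pose proof (ell_norm_pos a b t Ha Hb).
  assert (0 <= a * b * cos t * sin t) by (repeat apply Rmult_le_pos; lra).
  apply Rsqr_incr_0_var; [unfold Rsqr; nra | nra].
Qed.

Lemma is_derive_ell_norm a b t : 0 < a -> 0 < b ->
  is_derive (ell_norm a b) t ((b ^ 2 - a ^ 2) * sin t * cos t / ell_norm a b t).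
Proof.
  intros Ha Hb. pose proof (ell_norm_pos a b t Ha Hb). unfold ell_norm in *.
  auto_derive; [apply ell_norm_sq_pos; assumption |].
  replace (a * (a * 1) * (cos t * (cos t * 1)) + b * (b * 1) * (sin t * (sin t * 1)))
    with (a ^ 2 * cos t ^ 2 + b ^ 2 * sin t ^ 2) by ring.
  field. lra.
Qed.

Lemma continuous_inv_ell_norm a b t : 0 < a -> 0 < b -> continuous (fun s => / ell_norm a b s) t.
Proof.
  intros Ha Hb. apply (ex_derive_continuous (V := R_NormedModule)).
  eexists. apply is_derive_inv; [apply is_derive_ell_norm; assumption |].
  apply Rgt_not_eq, ell_norm_pos; assumption.
Qed.

(* Gauss's substitution, written so as to be smooth in [t]: for [l = landen a b t],
   [dt / ell_norm a b t = dl / (2 ell_norm ((a + b) / 2) (sqrt (a * b)) l)]. *)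
Definition landen (a b t : R) : R :=
  2 * t - atan ((a - b) * sin t * cos t / (a * cos t ^ 2 + b * sin t ^ 2)).

Lemma landen_denom_pos a b t : 0 < a -> 0 < b -> 0 < a * cos t ^ 2 + b * sin t ^ 2.
Proof.
  intros Ha Hb. pose proof (sin2_cos2_pow t).
  assert (0 <= cos t ^ 2 /\ 0 <= sin t ^ 2) by (split; nra).
  destruct (Rle_lt_dec (cos t ^ 2) 0); nra.
Qed.

Lemma is_derive_landen a b t : 0 < a -> 0 < b ->
  is_derive (landen a b) t ((ell_norm a b t ^ 2 + a * b) / ell_norm a b t ^ 2).
Proof.
  intros Ha Hb. rewrite ell_norm_sqr by assumption.
  pose proof (landen_denom_pos a b t Ha Hb). pose proof (ell_norm_sq_pos a b t Ha Hb).
  (* the factor [sin t ^ 2 + cos t ^ 2] turns the identity below into one of rational functions *)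
  apply is_derive_eq with
    ((a ^ 2 * cos t ^ 2 + b ^ 2 * sin t ^ 2 + a * b * (sin t ^ 2 + cos t ^ 2))
     / (a ^ 2 * cos t ^ 2 + b ^ 2 * sin t ^ 2));
    [| rewrite sin2_cos2_pow, Rmult_1_r; reflexivity].
  unfold landen. auto_derive; [lra |].
  field. repeat split; nra.
Qed.

Lemma ell_norm_landen a b t : 0 < a -> 0 < b ->
  ell_norm ((a + b) / 2) (sqrt (a * b)) (landen a b t)
  = (ell_norm a b t ^ 2 + a * b) / (2 * ell_norm a b t).
Proof.
  intros Ha Hb.
  pose proof (ell_norm_pos a b t Ha Hb) as Hr. pose proof (ell_norm_sqr a b t Ha Hb) as Hr2.
  pose proof (ell_norm_sq_pos a b t Ha Hb) as HN. pose proof (landen_denom_pos a b t Ha Hb) as HD.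
  pose proof (sin2_cos2_pow t) as Hsc.
  set (r := ell_norm a b t) in *. set (s := sin t) in *. set (c := cos t) in *.
  set (D := a * c ^ 2 + b * s ^ 2) in *.
  set (w := (a - b) * s * c / D).
  set (q := sqrt (1 + w ^ 2)).
  assert (Hq2 : q ^ 2 = 1 + w ^ 2) by (apply pow2_sqrt; nra).
  assert (Hq : 0 < q) by (apply sqrt_lt_R0; nra).
  assert (Hcos : cos (landen a b t) = (c ^ 2 - s ^ 2 + 2 * s * c * w) / q).
  { unfold landen. fold s c D w.
    rewrite cos_minus, cos_2a, sin_2a, cos_atan, sin_atan. unfold Rsqr.
    replace (1 + w * w) with (1 + w ^ 2) by ring. fold q s c. field. lra. }
  assert (Hsin : sin (landen a b t) = (2 * s * c - (c ^ 2 - s ^ 2) * w) / q).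
  { unfold landen. fold s c D w.
    rewrite sin_minus, cos_2a, sin_2a, cos_atan, sin_atan. unfold Rsqr.
    replace (1 + w * w) with (1 + w ^ 2) by ring. fold q s c. field. lra. }
  unfold ell_norm at 1. rewrite Hcos, Hsin, pow2_sqrt by nra.
  rewrite <- (sqrt_pow2 ((r ^ 2 + a * b) / (2 * r))) by (apply Rlt_le, Rdiv_lt_0_compat; nra).
  f_equal.
  (* as in [is_derive_landen], inserting [s ^ 2 + c ^ 2] makes this a rational identity *)
  replace (((r ^ 2 + a * b) / (2 * r)) ^ 2)
    with ((a ^ 2 * c ^ 2 + b ^ 2 * s ^ 2 + a * b * (s ^ 2 + c ^ 2)) ^ 2 * (s ^ 2 + c ^ 2)
          / (4 * (a ^ 2 * c ^ 2 + b ^ 2 * s ^ 2)))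
    by (rewrite Hsc, <- Hr2; field; lra).
  assert (Hdiv : forall u, (u / q) ^ 2 = u ^ 2 / (1 + w ^ 2))
    by (intros; rewrite <- Hq2; field; lra).
  rewrite !Hdiv.
  unfold w, D. field. unfold D in HD. repeat split; nra.
Qed.

Lemma landen_double a b u : sin u * cos u = 0 -> landen a b u = 2 * u.
Proof.
  intros H. unfold landen.
  replace ((a - b) * sin u * cos u) with ((a - b) * (sin u * cos u)) by ring.
  rewrite H, Rmult_0_r, Rdiv_0_l, atan_0. ring.
Qed.

Lemma landen_0 a b : landen a b 0 = 0.
Proof. rewrite landen_double; [ring | rewrite sin_0; ring]. Qed.

Lemma landen_step a b (G G1 : R -> R) u : 0 < a -> 0 < b ->
  (forall t, is_derive G t (/ ell_norm a b t)) ->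
  (forall t, is_derive G1 t (/ ell_norm ((a + b) / 2) (sqrt (a * b)) t)) ->
  G u - G 0 = (G1 (landen a b u) - G1 (landen a b 0)) / 2.
Proof.
  intros Ha Hb HG HG1.
  assert (Hdiff : forall t, is_derive (fun t => G t - / 2 * G1 (landen a b t)) t 0).
  { intros t. pose proof (ell_norm_pos a b t Ha Hb).
    eapply is_derive_eq.
    - apply is_derive_Rminus; [apply HG |].
      apply is_derive_scal, is_derive_Rcomp; [apply HG1 | apply is_derive_landen; assumption].
    - rewrite ell_norm_landen by assumption. field. nra. }
  pose proof (is_derive_zero_eq _ u 0 Hdiff). lra.
Qed.

Lemma agm_iter_S a b n : agm_iter a b (S n) = agm_iter ((a + b) / 2) (sqrt (a * b)) n.
Proof.
  induction n as [|n IH]; [reflexivity|].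
  change (agm_iter a b (S (S n)))
    with ((fst (agm_iter a b (S n)) + snd (agm_iter a b (S n))) / 2,
          sqrt (fst (agm_iter a b (S n)) * snd (agm_iter a b (S n)))).
  rewrite IH. reflexivity.
Qed.

Lemma agm_iter_S_comm a b n : agm_iter a b (S n) = agm_iter b a (S n).
Proof. rewrite !agm_iter_S, Rplus_comm, Rmult_comm. reflexivity. Qed.

Lemma agm_iter_pos a b n : 0 < a -> 0 < b ->
  0 < fst (agm_iter a b n) /\ 0 < snd (agm_iter a b n).
Proof.
  intros Ha Hb. induction n as [|n [H1 H2]]; simpl; [lra|].
  split; [lra | apply sqrt_lt_R0; nra].
Qed.

Lemma agm_iter_snd_le_fst a b n : 0 < a -> 0 < b ->
  snd (agm_iter a b (S n)) <= fst (agm_iter a b (S n)).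
Proof.
  intros Ha Hb. destruct (agm_iter_pos a b n Ha Hb) as [H1 H2]. simpl.
  set (u := fst (agm_iter a b n)) in *. set (v := snd (agm_iter a b n)) in *.
  rewrite <- (sqrt_pow2 ((u + v) / 2)) by lra.
  apply sqrt_le_1_alt. pose proof (pow2_ge_0 (u - v)). nra.
Qed.

Lemma agm_iter_bounds a b n : 0 < a <= b ->
  a <= fst (agm_iter a b n) <= b /\ a <= snd (agm_iter a b n) <= b.
Proof.
  intros Hab. induction n as [|n IH]; simpl; [lra|].
  set (u := fst (agm_iter a b n)) in *. set (v := snd (agm_iter a b n)) in *.
  split; [lra|]. split.
  - rewrite <- (sqrt_pow2 a) by lra. apply sqrt_le_1_alt. nra.
  - rewrite <- (sqrt_pow2 b) by lra. apply sqrt_le_1_alt. nra.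
Qed.

Lemma AGM_ge a b c N : 0 < a <= b ->
  (forall n, (N <= n)%nat -> c <= fst (agm_iter a b n)) -> c <= AGM a b.
Proof.
  intros Hab Hc. unfold AGM.
  assert (Hlow : Rbar_le c (Lim_seq (fun n => fst (agm_iter a b n)))).
  { rewrite <- (Lim_seq_const c). apply Lim_seq_le_loc. exists N. exact Hc. }
  assert (Hup : Rbar_le (Lim_seq (fun n => fst (agm_iter a b n))) b).
  { rewrite <- (Lim_seq_const b). apply Lim_seq_le_loc. exists 0%nat.
    intros n _. apply agm_iter_bounds, Hab. }
  destruct (Lim_seq _); simpl in *; easy.
Qed.

Lemma inv_ell_norm_integral_ge n : forall a b (G : R -> R) u,
  0 < a -> 0 < b -> (forall t, is_derive G t (/ ell_norm a b t)) ->
  0 <= u -> sin u * cos u = 0 ->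
  u <= (G u - G 0) * Rmax (fst (agm_iter a b n)) (snd (agm_iter a b n)).
Proof.
  induction n as [|n IH]; intros a b G u Ha Hb HG Hu Hsc.
  - simpl. set (M := Rmax a b).
    assert (HM : 0 < M) by (pose proof (Rmax_l a b); unfold M; lra).
    cut (M * G 0 - 0 <= M * G u - u); [nra|].
    apply (is_derive_nonneg_le (fun t => M * G t - t) (fun t => M * / ell_norm a b t - 1) 0 u Hu).
    + intros t. apply is_derive_Rminus;
        [apply is_derive_scal, HG | apply (is_derive_id (K := R_AbsRing))].
    + intros t _. pose proof (ell_norm_pos a b t Ha Hb).
      pose proof (ell_norm_le_max a b t Ha Hb) as Hmax. fold M in Hmax.
      cut (1 <= M * / ell_norm a b t); [lra|].
      apply (Rmult_le_reg_r (ell_norm a b t)); [assumption|]. field_simplify; lra.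
  - rewrite agm_iter_S.
    assert (Ha1 : 0 < (a + b) / 2) by lra.
    assert (Hb1 : 0 < sqrt (a * b)) by (apply sqrt_lt_R0; nra).
    destruct (ex_antiderivative (fun t => / ell_norm ((a + b) / 2) (sqrt (a * b)) t))
      as [G1 [_ HG1]].
    { intros t. apply continuous_inv_ell_norm; assumption. }
    assert (Hsc2 : sin (2 * u) * cos (2 * u) = 0).
    { rewrite sin_2a. replace (2 * sin u * cos u) with (2 * (sin u * cos u)) by ring.
      rewrite Hsc. ring. }
    pose proof (IH _ _ G1 (2 * u) Ha1 Hb1 HG1 ltac:(lra) Hsc2) as Hnext.
    pose proof (landen_step a b G G1 u Ha Hb HG HG1) as Hstep.
    rewrite landen_0, landen_double in Hstep by assumption.
    nra.
Qed.

Definition rhs_x (x y z : R) : R := - (x * z).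
Definition rhs_y (x y z : R) : R := y * z.
Definition rhs_z (x y z : R) : R := x ^ 2 - y ^ 2.

Definition traj_y (p q t : R) : R := p * q / ell_norm p q t.
Definition traj_z (p q t : R) : R := (p ^ 2 - q ^ 2) * sin t * cos t / ell_norm p q t.

Lemma is_derive_traj_x p q t : 0 < p -> 0 < q ->
  is_derive (ell_norm p q) t
    (/ ell_norm p q t * rhs_x (ell_norm p q t) (traj_y p q t) (traj_z p q t)).
Proof.
  intros Hp Hq. pose proof (ell_norm_pos p q t Hp Hq).
  eapply is_derive_eq; [apply is_derive_ell_norm; assumption |].
  unfold rhs_x, traj_z. field. lra.
Qed.

Lemma is_derive_traj_y p q t : 0 < p -> 0 < q ->
  is_derive (traj_y p q) t
    (/ ell_norm p q t * rhs_y (ell_norm p q t) (traj_y p q t) (traj_z p q t)).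
Proof.
  intros Hp Hq. pose proof (ell_norm_pos p q t Hp Hq).
  eapply is_derive_eq.
  - apply is_derive_div; [apply is_derive_const | apply is_derive_ell_norm; assumption | lra].
  - unfold rhs_y, traj_y, traj_z, zero; simpl. field. lra.
Qed.

Lemma is_derive_traj_z p q t : 0 < p -> 0 < q ->
  is_derive (traj_z p q) t
    (/ ell_norm p q t * rhs_z (ell_norm p q t) (traj_y p q t) (traj_z p q t)).
Proof.
  intros Hp Hq. pose proof (ell_norm_pos p q t Hp Hq).
  pose proof (ell_norm_sqr p q t Hp Hq) as Hr2. pose proof (sin2_cos2_pow t) as Hsc.
  eapply is_derive_eq.
  - apply is_derive_div; [| apply is_derive_ell_norm; assumption | lra].
    apply Derive.is_derive_mult; [apply is_derive_scal, is_derive_sin | apply is_derive_cos].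
  - unfold rhs_z, traj_y.
    set (r := ell_norm p q t) in *. set (s := sin t) in *. set (c := cos t) in *.
    field_simplify_eq; [| lra]. simpl in *. clearbody r s c. clear - Hr2 Hsc. nsatz.
Qed.

Definition field_gap (u1 u2 u3 v1 v2 v3 : R) : R :=
  (u1 - v1) * (rhs_x u1 u2 u3 - rhs_x v1 v2 v3)
  + (u2 - v2) * (rhs_y u1 u2 u3 - rhs_y v1 v2 v3)
  + (u3 - v3) * (rhs_z u1 u2 u3 - rhs_z v1 v2 v3).

Lemma field_gap_le u1 u2 u3 v1 v2 v3 : u1 ^ 2 + u2 ^ 2 + u3 ^ 2 <= 1 ->
  field_gap u1 u2 u3 v1 v2 v3 <= 2 * ((u1 - v1) ^ 2 + (u2 - v2) ^ 2 + (u3 - v3) ^ 2).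
Proof.
  intros Hu. unfold field_gap, rhs_x, rhs_y, rhs_z.
  set (d1 := u1 - v1). set (d2 := u2 - v2). set (d3 := u3 - v3).
  replace (d1 * (- (u1 * u3) - - (v1 * v3)) + d2 * (u2 * u3 - v2 * v3)
           + d3 * (u1 ^ 2 - u2 ^ 2 - (v1 ^ 2 - v2 ^ 2)))
    with (u3 * (d2 ^ 2 - d1 ^ 2) + u1 * (d1 * d3) - u2 * (d2 * d3))
    by (unfold d1, d2, d3; ring).
  assert (Hunit : forall u, u ^ 2 <= 1 -> -1 <= u <= 1) by (intros u H; split; nra).
  pose proof (pow2_ge_0 u1). pose proof (pow2_ge_0 u2). pose proof (pow2_ge_0 u3).
  destruct (Hunit u1 ltac:(lra)), (Hunit u2 ltac:(lra)), (Hunit u3 ltac:(lra)).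
  assert (u3 * (d2 ^ 2 - d1 ^ 2) <= d1 ^ 2 + d2 ^ 2) by nra.
  (* [(d^2 + d'^2)/2 - u d d' = ((1 + u) (d - d')^2 + (1 - u) (d + d')^2) / 4] *)
  assert (u1 * (d1 * d3) <= (d1 ^ 2 + d3 ^ 2) / 2)
    by (pose proof (pow2_ge_0 (d1 - d3)); pose proof (pow2_ge_0 (d1 + d3)); nra).
  assert (- (u2 * (d2 * d3)) <= (d2 ^ 2 + d3 ^ 2) / 2)
    by (pose proof (pow2_ge_0 (d2 - d3)); pose proof (pow2_ge_0 (d2 + d3)); nra).
  pose proof (pow2_ge_0 d1). pose proof (pow2_ge_0 d2). pose proof (pow2_ge_0 d3). lra.
Qed.

Lemma gronwall_zero (e de : R -> R) K t : 0 <= t ->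
  (forall s, is_derive e s (de s)) -> e 0 = 0 ->
  (forall s, 0 <= s <= t -> de s <= K * e s) -> e t <= 0.
Proof.
  intros Ht He He0 Hde.
  assert (Hdecr : - (e 0 * exp (- (K * 0))) <= - (e t * exp (- (K * t)))).
  { apply (is_derive_nonneg_le (fun s => - (e s * exp (- (K * s))))
             (fun s => - ((de s - K * e s) * exp (- (K * s)))) 0 t Ht).
    - intros s. eapply is_derive_eq.
      + apply is_derive_Ropp, Derive.is_derive_mult; [apply He |].
        apply (is_derive_Rcomp exp (fun s => - (K * s))); [apply is_derive_exp |].
        apply is_derive_Ropp, is_derive_scal, (is_derive_id (K := R_AbsRing)).
      + unfold one; simpl. ring.
    - intros s Hs. pose proof (Hde s Hs). pose proof (exp_pos (- (K * s))). nra. }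
  rewrite He0 in Hdecr. pose proof (exp_pos (- (K * t))). nra.
Qed.

Definition b_majorant (p q t : R) : R :=
  2 * p + 2 * (q ^ 2 * sin t - p ^ 2 * cos t) / ell_norm p q t.

Lemma is_derive_b_majorant p q t : 0 < p -> 0 < q ->
  is_derive (b_majorant p q) t
    (2 * p ^ 2 * q ^ 2 * (sin t + cos t) / ell_norm p q t ^ 3).
Proof.
  intros Hp Hq. pose proof (ell_norm_pos p q t Hp Hq).
  pose proof (ell_norm_sqr p q t Hp Hq) as Hr2. pose proof (sin2_cos2_pow t) as Hsc.
  eapply is_derive_eq.
  - apply is_derive_Rplus; [apply is_derive_const |].
    apply is_derive_div; [| apply is_derive_ell_norm; assumption | lra].
    apply is_derive_scal, is_derive_Rminus;
      apply is_derive_scal; [apply is_derive_sin | apply is_derive_cos].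
  - unfold zero; simpl.
    set (r := ell_norm p q t) in *. set (s := sin t) in *. set (c := cos t) in *.
    field_simplify_eq; [| lra]. simpl in *. clearbody r s c. clear - Hr2 Hsc. nsatz.
Qed.

Section Solution.

Variables p q : R.
Hypotheses (Hq : 0 < q) (Hqp : q <= p) (Hpq : p ^ 2 + q ^ 2 = 1).
Variables x y z : R -> R.
Hypotheses (Hx : forall t, is_derive x t (rhs_x (x t) (y t) (z t)))
           (Hy : forall t, is_derive y t (rhs_y (x t) (y t) (z t)))
           (Hz : forall t, is_derive z t (rhs_z (x t) (y t) (z t)))
           (Hx0 : x 0 = p) (Hy0 : y 0 = q) (Hz0 : z 0 = 0).
Variable F : R -> R.
Hypotheses (HF : forall t, is_derive F t (/ ell_norm p q t)) (HF0 : F 0 = 0).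

Let Hp : 0 < p. Proof. lra. Qed.

Lemma solution_on_sphere t : x t ^ 2 + y t ^ 2 + z t ^ 2 = 1.
Proof.
  assert (Hconst : forall s, is_derive (fun s => x s ^ 2 + y s ^ 2 + z s ^ 2) s 0).
  { intros s. eapply is_derive_eq.
    - apply is_derive_Rplus; [apply is_derive_Rplus |]; apply is_derive_Rsqr; auto.
    - unfold rhs_x, rhs_y, rhs_z. ring. }
  rewrite (is_derive_zero_eq _ t 0 Hconst), Hx0, Hy0, Hz0. nra.
Qed.

Lemma solution_eq_traj t : 0 <= t ->
  x (F t) = ell_norm p q t /\ y (F t) = traj_y p q t /\ z (F t) = traj_z p q t.
Proof.
  intros Ht.
  set (gap := fun s => (x (F s) - ell_norm p q s) ^ 2 + (y (F s) - traj_y p q s) ^ 2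
                       + (z (F s) - traj_z p q s) ^ 2).
  assert (Hgap : forall s, is_derive gap s
    (2 / ell_norm p q s * field_gap (x (F s)) (y (F s)) (z (F s))
                            (ell_norm p q s) (traj_y p q s) (traj_z p q s))).
  { intros s. pose proof (ell_norm_pos p q s Hp Hq).
    eapply is_derive_eq.
    - apply is_derive_Rplus; [apply is_derive_Rplus |];
        apply is_derive_Rsqr, is_derive_Rminus.
      + apply (is_derive_Rcomp x F); [apply Hx | apply HF].
      + apply is_derive_traj_x; assumption.
      + apply (is_derive_Rcomp y F); [apply Hy | apply HF].
      + apply is_derive_traj_y; assumption.
      + apply (is_derive_Rcomp z F); [apply Hz | apply HF].
      + apply is_derive_traj_z; assumption.
    - unfold field_gap. field. lra. }
  assert (Hgap_t : gap t <= 0).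
  { apply (gronwall_zero gap _ (4 / q) t Ht Hgap).
    - unfold gap, traj_y, traj_z. rewrite HF0, Hx0, Hy0, Hz0, ell_norm_0, sin_0 by assumption.
      field. lra.
    - intros s _. pose proof (ell_norm_pos p q s Hp Hq).
      assert (Hqr : q <= ell_norm p q s)
        by (rewrite <- (Rmin_right p q) at 1 by assumption; apply ell_norm_ge_min; assumption).
      pose proof (field_gap_le (x (F s)) (y (F s)) (z (F s))
                    (ell_norm p q s) (traj_y p q s) (traj_z p q s)
                    (Req_le _ _ (solution_on_sphere (F s)))) as Hfield.
      assert (0 <= gap s)
        by (unfold gap; pose proof (pow2_ge_0 (x (F s) - ell_norm p q s));
            pose proof (pow2_ge_0 (y (F s) - traj_y p q s));
            pose proof (pow2_ge_0 (z (F s) - traj_z p q s)); lra).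
      change (_ ^ 2 + _ ^ 2 + _ ^ 2) with (gap s) in Hfield.
      assert (/ ell_norm p q s <= / q) by (apply Rinv_le_contravar; assumption).
      assert (0 < / ell_norm p q s) by (apply Rinv_0_lt_compat; assumption).
      unfold Rdiv. nra. }
  assert (0 <= (x (F t) - ell_norm p q t) ^ 2) by apply pow2_ge_0.
  assert (0 <= (y (F t) - traj_y p q t) ^ 2) by apply pow2_ge_0.
  assert (0 <= (z (F t) - traj_z p q t) ^ 2) by apply pow2_ge_0.
  unfold gap in Hgap_t. repeat split; apply Rminus_diag_uniq; nra.
Qed.

Variable b : R -> R.
Hypotheses (Hb : forall t, is_derive b t (2 * y t - b t * z t)) (Hb0 : b 0 = 0).

(* Along the solution [(b y)' = 2 y ^ 2], so [d/dt (b y)(F t) = 2 p^2 q^2 / ell_norm p q t ^ 3],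
   which on [0, PI/2] is at most the derivative of [b_majorant]. *)
Lemma b_mul_traj_y_le t : 0 <= t <= PI / 2 -> b (F t) * traj_y p q t <= b_majorant p q t.
Proof.
  intros Ht.
  cut (b_majorant p q 0 - b (F 0) * y (F 0) <= b_majorant p q t - b (F t) * y (F t)).
  { destruct (solution_eq_traj t ltac:(lra)) as [_ [-> _]].
    rewrite HF0, Hb0. unfold b_majorant. rewrite ell_norm_0, sin_0, cos_0 by assumption.
    replace (2 * p + 2 * (q ^ 2 * 0 - p ^ 2 * 1) / p) with 0 by (field; lra). lra. }
  apply (is_derive_nonneg_le (fun s => b_majorant p q s - b (F s) * y (F s))
           (fun s => 2 * p ^ 2 * q ^ 2 * (sin s + cos s) / ell_norm p q s ^ 3
                     - 2 * y (F s) ^ 2 / ell_norm p q s) 0 t); [lra | |].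
  - intros s. pose proof (ell_norm_pos p q s Hp Hq).
    eapply is_derive_eq.
    + apply is_derive_Rminus; [apply is_derive_b_majorant; assumption |].
      apply Derive.is_derive_mult; apply is_derive_Rcomp; auto.
    + unfold rhs_y. field. lra.
  - intros s Hs.
    destruct (solution_eq_traj s ltac:(lra)) as [_ [-> _]]. unfold traj_y.
    pose proof (ell_norm_pos p q s Hp Hq).
    assert (Hsc : 1 <= sin s + cos s).
    { assert (0 <= sin s) by (apply sin_ge_0; lra). assert (0 <= cos s) by (apply cos_ge_0; lra).
      pose proof (sin2_cos2_pow s). nra. }
    replace (2 * p ^ 2 * q ^ 2 * (sin s + cos s) / ell_norm p q s ^ 3
             - 2 * (p * q / ell_norm p q s) ^ 2 / ell_norm p q s)
      with (2 * p ^ 2 * q ^ 2 * (sin s + cos s - 1) / ell_norm p q s ^ 3) by (field; lra).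
    apply Rle_mult_inv_pos; [nra | apply pow_lt; assumption].
Qed.

Lemma b_le_on_quarter_period s : 0 <= s <= F (PI / 2) -> b s <= 2 + 2 * q / p.
Proof.
  intros Hs. pose proof PI_RGT_0.
  destruct (IVT_gen F 0 (PI / 2) s) as [t [Ht <-]].
  { intros u. apply (continuity_pt_of_is_derive F (fun u => / ell_norm p q u)), HF. }
  { rewrite HF0, Rmin_left, Rmax_right; lra. }
  rewrite Rmin_left, Rmax_right in Ht by lra.
  pose proof (b_mul_traj_y_le t Ht) as Hmaj. unfold traj_y, b_majorant in Hmaj.
  pose proof (ell_norm_pos p q t Hp Hq).
  assert (Hs0 : 0 <= sin t) by (apply sin_ge_0; lra).
  assert (Hc0 : 0 <= cos t) by (apply cos_ge_0; lra).
  pose proof (ell_norm_le_lin p q t Hp Hq Hc0 Hs0). destruct (SIN_bound t) as [_ Hs1].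
  assert (Hbpq : b (F t) * (p * q) <= 2 * p * q + 2 * q ^ 2).
  { apply Rmult_le_compat_r with (r := ell_norm p q t) in Hmaj; [| lra].
    replace (b (F t) * (p * q / ell_norm p q t) * ell_norm p q t) with (b (F t) * (p * q))
      in Hmaj by (field; lra).
    replace ((2 * p + 2 * (q ^ 2 * sin t - p ^ 2 * cos t) / ell_norm p q t) * ell_norm p q t)
      with (2 * p * ell_norm p q t + 2 * (q ^ 2 * sin t - p ^ 2 * cos t)) in Hmaj by (field; lra).
    assert (p * ell_norm p q t <= p * (p * cos t + q * sin t)) by (apply Rmult_le_compat_l; lra).
    assert ((p * q + q ^ 2) * sin t <= (p * q + q ^ 2) * 1)
      by (apply Rmult_le_compat_l; nra).
    nra. }
  apply (Rmult_le_reg_r (p * q)); [nra |].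
  replace ((2 + 2 * q / p) * (p * q)) with (2 * p * q + 2 * q ^ 2) by (field; lra). exact Hbpq.
Qed.

End Solution.

Lemma sqrt_mul_le_half_sum p q : 0 <= p -> 0 <= q -> sqrt (p * q) <= (p + q) / 2.
Proof.
  intros Hp Hq. rewrite <- (sqrt_pow2 ((p + q) / 2)) by lra.
  apply sqrt_le_1_alt. pose proof (pow2_ge_0 (p - q)). nra.
Qed.

Lemma agm_le_quarter_period p q (G : R -> R) : 0 < p -> 0 < q ->
  (forall t, is_derive G t (/ ell_norm p q t)) -> G 0 = 0 ->
  PI / 2 <= G (PI / 2) * AGM (sqrt (p * q)) ((p + q) / 2).
Proof.
  intros Hp Hq HG HG0. pose proof PI_RGT_0.
  assert (Hiter : forall n,
    PI / 2 <= G (PI / 2) * fst (agm_iter (sqrt (p * q)) ((p + q) / 2) (S n))).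
  { intros n.
    pose proof (inv_ell_norm_integral_ge (S (S n)) p q G (PI / 2) Hp Hq HG
                  ltac:(lra) ltac:(rewrite cos_PI2; ring)) as Hn.
    rewrite HG0, Rminus_0_r, Rmax_left in Hn by (apply agm_iter_snd_le_fst; assumption).
    rewrite agm_iter_S_comm, <- agm_iter_S. exact Hn. }
  assert (HGpos : 0 < G (PI / 2)).
  { pose proof (Hiter 0%nat).
    destruct (agm_iter_pos (sqrt (p * q)) ((p + q) / 2) 1) as [Hfst _];
      [apply sqrt_lt_R0; nra | lra |].
    nra. }
  assert (Hagm : PI / (2 * G (PI / 2)) <= AGM (sqrt (p * q)) ((p + q) / 2)).
  { apply (AGM_ge _ _ _ 1).
    - split; [apply sqrt_lt_R0; nra | apply sqrt_mul_le_half_sum; lra].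
    - intros [|n] Hn; [lia |]. pose proof (Hiter n).
      apply (Rmult_le_reg_l (2 * G (PI / 2))); [lra |]. field_simplify; lra. }
  apply (Rmult_le_compat_l (G (PI / 2))) in Hagm; [| lra].
  replace (G (PI / 2) * (PI / (2 * G (PI / 2)))) with (PI / 2) in Hagm by (field; lra).
  exact Hagm.
Qed.

Lemma L_of_bounds alpha p q (G : R -> R) : 0 < alpha -> 0 < p -> 0 < q ->
  p ^ 2 + q ^ 2 = 1 -> p * q = alpha ^ 2 ->
  (forall t, is_derive G t (/ ell_norm p q t)) -> G 0 = 0 ->
  L_of alpha / 2 <= G (PI / 2) /\ L_of alpha <= PI / alpha.
Proof.
  intros Ha Hp Hq Hpq Hprod HG HG0. pose proof PI_RGT_0.
  assert (Halpha : sqrt (p * q) = alpha) by (rewrite Hprod; apply sqrt_pow2; lra).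
  assert (Hbeta : sqrt (1 + 2 * alpha ^ 2) / 2 = (p + q) / 2).
  { rewrite <- Hprod, <- Hpq, <- (sqrt_pow2 (p + q)) by lra. f_equal. f_equal. ring. }
  assert (Hab : 0 < alpha <= (p + q) / 2)
    by (split; [lra | rewrite <- Halpha; apply sqrt_mul_le_half_sum; lra]).
  assert (Hagm : alpha <= AGM alpha ((p + q) / 2))
    by (apply (AGM_ge _ _ _ 0); [| intros n _; apply agm_iter_bounds]; exact Hab).
  pose proof (agm_le_quarter_period p q G Hp Hq HG HG0) as Hquarter.
  unfold L_of. rewrite Hbeta. rewrite Halpha in Hquarter.
  split.
  - apply (Rmult_le_reg_r (AGM alpha ((p + q) / 2))); [lra |].
    field_simplify; lra.
  - apply Rmult_le_compat_l; [lra |]. apply Rinv_le_contravar; lra.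
Qed.

Lemma two_div_lt_four_mul p q : 0 < q < p -> p ^ 2 + q ^ 2 = 1 -> 2 * q / p < 4 * (p * q).
Proof.
  intros Hqp Hpq. assert (1 / 2 < p ^ 2) by nra.
  apply (Rmult_lt_reg_r p); [lra |]. field_simplify; nra.
Qed.

Theorem lemma5p1 :
  forall eps : R, 0 < eps ->
  exists L0 : R, PI * sqrt 2 < L0 /\
  forall L : R, L0 < L ->
  forall alpha : R, 0 < alpha -> alpha < 1 / sqrt 2 -> L_of alpha = L ->
  forall x0 y0 : R, 0 < y0 -> y0 < x0 ->
    x0 ^ 2 + y0 ^ 2 = 1 -> x0 * y0 = alpha ^ 2 ->
  forall x y z a b : R -> R,
    x 0 = x0 -> y 0 = y0 -> z 0 = 0 -> a 0 = 0 -> b 0 = 0 ->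
    (forall t, is_derive x t (- (x t * z t))) ->
    (forall t, is_derive y t (y t * z t)) ->
    (forall t, is_derive z t (x t ^ 2 - y t ^ 2)) ->
    (forall t, is_derive a t (2 * x t + a t * z t)) ->
    (forall t, is_derive b t (2 * y t - b t * z t)) ->
    b (L / 2) < 2 + eps.
Proof.
  intros eps Heps. pose proof PI_RGT_0.
  assert (Hseps : 0 < sqrt eps) by (apply sqrt_lt_R0; lra).
  set (alpha0 := Rmin (1 / 2) (sqrt eps / 2)).
  assert (Halpha0 : 0 < alpha0 <= 1 / 2 /\ alpha0 <= sqrt eps / 2)
    by (repeat split; [apply Rmin_glb_lt; lra | apply Rmin_l | apply Rmin_r]).
  exists (PI / alpha0). split.
  { assert (sqrt 2 < 2)
      by (pose proof (sqrt_pos 2); assert (sqrt 2 ^ 2 = 2) by (apply pow2_sqrt; lra); nra).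
    apply Rlt_le_trans with (PI * 2); [apply Rmult_lt_compat_l; lra |].
    apply Rmult_le_compat_l; [lra |].
    apply (Rmult_le_reg_r alpha0); [lra |]. rewrite Rinv_l; lra. }
  (* [y0 < x0] already forces [alpha < 1 / sqrt 2], and [a] does not enter the equation of [b] *)
  intros L HL alpha Halpha _ <- x0 y0 Hy0 Hyx Hsum Hprod x y z a b Hx0 Hy0' Hz0 _ Hb0 Hx Hy Hz _ Hb.
  destruct (ex_antiderivative (fun t => / ell_norm x0 y0 t)) as [F [HF0 HF]].
  { intros t. apply continuous_inv_ell_norm; lra. }
  destruct (L_of_bounds alpha x0 y0 F Halpha ltac:(lra) Hy0 Hsum Hprod HF HF0) as [Hquarter Hpi].
  assert (Hsmall : alpha < alpha0).
  { apply Rnot_le_lt. intros Hle.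
    assert (PI / alpha <= PI / alpha0)
      by (apply Rmult_le_compat_l; [lra | apply Rinv_le_contravar; lra]).
    lra. }
  assert (Hratio : 2 * y0 / x0 < eps).
  { pose proof (two_div_lt_four_mul x0 y0 ltac:(lra) Hsum) as H4. rewrite Hprod in H4.
    assert (sqrt eps ^ 2 = eps) by (apply pow2_sqrt; lra). nra. }
  assert (0 < PI / alpha0) by (apply Rdiv_lt_0_compat; lra).
  pose proof (b_le_on_quarter_period x0 y0 Hy0 ltac:(lra) Hsum x y z Hx Hy Hz Hx0 Hy0' Hz0
                F HF HF0 b Hb Hb0 (L_of alpha / 2) ltac:(lra)).
  lra.
Qed.
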